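(* Let $a=\{a_1,\dots,a_m\}$ be a set of positive integers and $n\ge 0$. There exist a function $P_{n,a}:\mathbb{Z}_{\ge0}\to\mathbb{Q}$ (in fact a polynomial) and an integer $N$ such that for every $s\ge 1$ and all integers $k_1,\dots,k_s\ge N$, the number of $n$-element independent sets of the disjoint union $F(a,k_1)+F(a,k_2)+\cdots+F(a,k_s)$ equals $P_{n,a}(k_1+\cdots+k_s)$. In other words, this number depends only on $a$, $n$ and $\sum_ik_i$.
   Context: For a set $a=\{a_1,\dots,a_m\}$ of positive integers and a positive integer $k$, $F(a,k)$ is the simple graph with vertex set $\mathbb{Z}/k\mathbb{Z}$ in which distinct vertices $i,j$ are adjacent if and only if $i-j\equiv a_r\pmod k$ or $j-i\equiv a_r\pmod k$ for some $1\le r\le m$. $G_1+\cdots+G_s$ denotes the disjoint union of graphs. An independent set is a set of vertices no two of which are adjacent. *)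

From HB Require Import structures.
From mathcomp Require Import all_boot all_order all_algebra.
Set Implicit Arguments. Unset Strict Implicit. Unset Printing Implicit Defensive.

(* Adjacency in F(a,k): vertices x, y in {0,..,k-1} representing Z/kZ;
   distinct x,y adjacent iff x - y = a_r or y - x = a_r (mod k) for some r. *)
Definition Fadj (a : seq nat) (k : nat) (x y : nat) : bool :=
  (x != y) &&
  has (fun r => ((x + k - y) %% k == r %% k) || ((y + k - x) %% k == r %% k)) a.

(* Vertex set of F(a,k_1)+...+F(a,k_s), where ks = [:: k_1; ...; k_s]:
   a vertex is a component index i together with an element of Z/k_i Z. *)
Definition vert (ks : seq nat) : finType :=
  {i : 'I_(size ks) & 'I_(nth 0 ks i)}.

Definition union_adj (a : seq nat) (ks : seq nat) (u v : vert ks) : bool :=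
  (tag u == tag v) &&
  Fadj a (nth 0 ks (tag u)) (nat_of_ord (tagged u)) (nat_of_ord (tagged v)).

Definition independent (a ks : seq nat) (S : {set vert ks}) : bool :=
  [forall u in S, forall v in S, ~~ union_adj a u v].

Definition num_indep (a ks : seq nat) (n : nat) : nat :=
  #|[set S : {set vert ks} | independent a S & #|S| == n]|.

From HB Require Import structures.
From mathcomp Require Import all_boot all_order all_algebra zify ring.
Import GRing.Theory Num.Theory.
Set Implicit Arguments. Unset Strict Implicit. Unset Printing Implicit Defensive.
Local Open Scope ring_scope.

(* Counting ordered n-tuples of distinct, pairwise non-adjacent vertices gives
   n! times the wanted number; expand it by inclusion-exclusion over the set J of
   pairs of positions forced to be equal or adjacent.  For fixed J such a tuple is
   determined by the vertex at a root of each connected component of J (any of the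
   k_1 + ... + k_s vertices) and by the offsets of the other positions from their
   root along its cycle.  These offsets are bounded by n * max a, so once every k_i
   is large no wrap-around occurs and the admissible offset patterns do not depend
   on the k_i: each term is a constant times (k_1 + ... + k_s) ^ #components(J). *)

Lemma natr_card_set (R : pzSemiRingType) (T : finType) (P : pred T) :
  #|[set x | P x]|%:R = \sum_x (P x)%:R :> R.
Proof.
rewrite -sum1_card natr_sum big_mkcond; apply: eq_bigr => x _.
by rewrite inE; case: (P x).
Qed.

Lemma prod_natr_bool (R : comPzSemiRingType) (I : finType) (A : pred I)
    (b : I -> bool) :
  \prod_(i in A) (b i)%:R = [forall i in A, b i]%:R :> R.
Proof.
have [/forall_inP bA | /forall_inPn [i iA nbi]] := boolP [forall i in A, b i].
  by rewrite big1 // => i /bA ->.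
by rewrite (bigD1 i iA) /= (negbTE nbi) mul0r.
Qed.

Lemma inclusion_exclusion (R : comPzRingType) (I T : finType) (bad : I -> pred T) :
  #|[set x | [forall i, ~~ bad i x]]|%:R =
  \sum_(J : {set I}) (-1) ^+ #|J| * #|[set x | [forall i in J, bad i x]]|%:R :> R.
Proof.
transitivity (\sum_x \prod_i (- (bad i x)%:R + 1) : R).
  rewrite natr_card_set; apply: eq_bigr => x _.
  rewrite -(prod_natr_bool _ predT); apply: eq_bigr => i _.
  by case: (bad i x); rewrite /= ?oppr0 ?add0r ?addNr.
under eq_bigr => x _ do rewrite bigA_distr.
rewrite exchange_big; apply: eq_bigr => J _.
rewrite natr_card_set mulr_sumr; apply: eq_bigr => x _.
by rewrite -prod_natr_bool -prodrN [RHS]big_mkcond.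
Qed.

Section LabelledIndependentSets.
Variables (T : finType) (e : rel T) (n : nat).
Hypothesis e_irr : irreflexive e.

Definition indep_sets : {set {set T}} :=
  [set S : {set T} | [forall u in S, forall v in S, ~~ e u v] & #|S| == n].

Definition indep_tuples : {set {ffun 'I_n -> T}} :=
  [set f : {ffun 'I_n -> T} | [forall p : 'I_n * 'I_n,
             ~~ ((p.1 != p.2) && ((f p.1 == f p.2) || e (f p.1) (f p.2)))]].

Lemma indep_tuple_inj f : f \in indep_tuples -> injective f.
Proof.
rewrite inE => /forallP indf i j fij; apply/eqP/negPn/negP => neq_ij.
by have := indf (i, j); rewrite /= neq_ij fij eqxx.
Qed.

Lemma indep_tuple_image f :
  f \in indep_tuples -> [set f i | i : 'I_n] \in indep_sets.
Proof.
move=> indf; rewrite inE card_in_imset ?card_ord; last first.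
  by move=> i j _ _; apply: indep_tuple_inj.
rewrite eqxx andbT; apply/forall_inP => _ /imsetP[i _ ->].
apply/forall_inP => _ /imsetP[j _ ->].
have [-> | neq_ij] := eqVneq i j; first by rewrite e_irr.
by move: indf; rewrite inE => /forallP/(_ (i, j)); rewrite /= neq_ij negb_or => /andP[].
Qed.

Lemma indep_tuple_onto f S : S \in indep_sets ->
  (f \in indep_tuples) && ([set f i | i : 'I_n] == S) = (f \in ffun_on S) && injectiveb f.
Proof.
rewrite inE => /andP[/forall_inP indS /eqP cardS].
apply/andP/andP => [[indf /eqP <-] | [/ffun_onP fS /injectiveP injf]].
  by split; [apply/ffun_onP => i; rewrite imset_f | apply/injectiveP/indep_tuple_inj].
have imf : [set f i | i : 'I_n] = S.
  apply/eqP; rewrite eqEcard card_in_imset ?card_ord ?cardS ?leqnn ?andbT //.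
    by apply/subsetP => _ /imsetP[i _ ->].
  by move=> i j _ _ /injf.
split; last by rewrite imf.
rewrite inE; apply/forallP => -[i j] /=; rewrite negb_and negbK negb_or.
have [-> // | neq_ij] := eqVneq i j; rewrite (inj_eq injf) neq_ij /=.
by move: (indS _ (fS i)) => /forall_inP/(_ _ (fS j)).
Qed.

Lemma card_indep_tuples : #|indep_tuples| = (n`! * #|indep_sets|)%N.
Proof.
rewrite -sum1_card (partition_big _ (mem indep_sets) indep_tuple_image) /=.
rewrite mulnC -sum_nat_const; apply: eq_bigr => S indS.
rewrite (eq_bigl _ _ (fun f => indep_tuple_onto f indS)) sum1_card -cardsE.
rewrite card_inj_ffuns_on card_ord.
by move: indS; rewrite inE => /andP[_ /eqP ->]; rewrite ffactnn.
Qed.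

End LabelledIndependentSets.

Lemma dvdz_small (k : nat) (z : int) : (`|z| < k)%N -> (k%:Z %| z)%Z = (z == 0).
Proof.
move=> lt_zk; apply/idP/eqP => [|->]; last exact: dvdz0.
rewrite dvdzE /= => /dvdn_leq le_kz; apply/eqP; rewrite -absz_eq0.
by apply: contraTT lt_zk; rewrite -lt0n -leqNgt => /le_kz.
Qed.

Section CyclicCoordinates.
Variable ks : seq nat.
Implicit Types (u v : vert ks) (d : int).

Definition clen u : nat := nth 0 ks (tag u).
Definition pos u : int := (tagged u : nat)%:Z.

Definition shift u d : vert ks :=
  Tagged (fun i : 'I_(size ks) => 'I_(nth 0 ks i))
         (insubd (tagged u) (absz ((pos u + d) %% clen u)%Z)).

Lemma clen_gt0 u : (0 < clen u)%N.
Proof. exact: leq_ltn_trans (ltn_ord (tagged u)). Qed.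

Lemma pos_lt u : pos u < (clen u)%:Z.
Proof. by rewrite ltz_nat; apply: ltn_ord. Qed.

Lemma tag_pos_inj u v : tag u = tag v -> pos u = pos v -> u = v.
Proof. by case: u => i x; case: v => j y /= eq_ij; subst j => -[/val_inj ->]. Qed.

Lemma pos_shift u d : pos (shift u d) = ((pos u + d) %% clen u)%Z.
Proof.
have k_gt0 : (0 < (clen u)%:Z) by rewrite ltz_nat clen_gt0.
have mod_ge0 := modz_ge0 (pos u + d) (lt0r_neq0 k_gt0).
rewrite {1}/pos /shift /= val_insubd ifT ?gez0_abs //.
by rewrite -ltz_nat gez0_abs // ltz_pmod.
Qed.

Lemma shift_eqE u v d :
  (v == shift u d) = (tag u == tag v) && ((clen u)%:Z %| pos v - pos u - d)%Z.
Proof.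
have [eq_tag | ne_tag] := eqVneq (tag u) (tag v); last first.
  by apply/negbTE; apply: contra_neq ne_tag => ->.
have clen_uv : clen v = clen u by rewrite /clen eq_tag.
rewrite -addrA -opprD -eqz_mod_dvd modz_small; last by rewrite -clen_uv pos_lt andbT.
apply/eqP/eqP => [-> | pos_v]; first by rewrite pos_shift.
by apply: tag_pos_inj; rewrite // pos_shift.
Qed.

Lemma tag_shift u d : tag (shift u d) = tag u. Proof. by []. Qed.

Lemma dvdz_pos_shift u d : ((clen u)%:Z %| pos (shift u d) - pos u - d)%Z.
Proof. by have := eqxx (shift u d); rewrite shift_eqE => /andP[]. Qed.

Lemma shift0 u : shift u 0 = u.
Proof. by apply/esym/eqP; rewrite shift_eqE eqxx subr0 subrr dvdz0. Qed.

Lemma shiftD u d d' : shift (shift u d) d' = shift u (d + d').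
Proof.
apply/eqP; rewrite shift_eqE !tag_shift eqxx andTb.
have := rpredD (dvdz_pos_shift (shift u d) d') (dvdz_pos_shift u d).
set x := pos (shift _ d'); set y := pos (shift u d).
by congr (_ %| _)%Z; ring.
Qed.

Lemma shiftK u d : shift (shift u d) (- d) = u.
Proof. by rewrite shiftD subrr shift0. Qed.

Lemma shift_inj u d d' : (`|d - d'| < clen u)%N -> shift u d = shift u d' -> d = d'.
Proof.
move=> small eq_shift; apply/eqP; rewrite -subr_eq0 -(dvdz_small small).
have := rpredB (dvdz_pos_shift u d') (dvdz_pos_shift u d).
rewrite eq_shift; set x := pos _.
by congr (_ %| _)%Z; ring.
Qed.

End CyclicCoordinates.

Section CirculantAdjacency.
Variable a : seq nat.

Definition jump (z : int) : bool :=
  (z == 0) || has (fun r : nat => (z == r%:Z) || (z == - r%:Z)) a.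

Lemma jump_le M z : all (fun r => r <= M)%N a -> jump z -> (`|z| <= M)%N.
Proof.
move=> /allP le_aM /orP[/eqP -> // | /hasP[r /le_aM le_rM /orP[] /eqP ->]] //.
by rewrite abszN.
Qed.

Lemma modn_eq_dvdz (k x y r : nat) : (y < k)%N ->
  ((x + k - y) %% k == r %% k)%N = (k%:Z %| x%:Z - y%:Z - r%:Z)%Z.
Proof.
move=> lt_yk; rewrite -eqz_nat -!modz_nat eqz_mod_dvd.
have -> : (x + k - y)%N%:Z - r%:Z = x%:Z - y%:Z - r%:Z + k%:Z by lia.
exact: rpredDr (dvdzz _).
Qed.

Variable ks : seq nat.
Implicit Types (u v w : vert ks) (d : int).

Definition near u v : bool := (u == v) || union_adj a u v.

Lemma union_adj_irr : irreflexive (@union_adj a ks).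
Proof. by move=> u; rewrite /union_adj /Fadj !eqxx. Qed.

Lemma near_shiftE u v : near u v = (v == shift u 0) ||
  has (fun r : nat => (v == shift u r%:Z) || (v == shift u (- r%:Z))) a.
Proof.
rewrite /near /union_adj shift0 eq_sym.
have [// | ne_vu /=] := eqVneq v u.
have [eq_tag | ne_tag] := eqVneq (tag u) (tag v); last first.
  by apply/esym/hasPn => r _; rewrite !shift_eqE (negbTE ne_tag).
rewrite andTb /Fadj.
have -> : (tagged u : nat) != tagged v.
  by apply: contra_neq ne_vu => eq_x; apply: tag_pos_inj; rewrite /pos ?eq_x.
have lt_v : (tagged v < clen u)%N by rewrite /clen eq_tag ltn_ord.
apply: eq_has => r /=; rewrite orbC !shift_eqE (introT eqP eq_tag) !modn_eq_dvdz //.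
congr (_ || _); rewrite -[X in _ = X]rpredN /pos; congr (_ %| _)%Z; ring.
Qed.

Lemma nearP u v : reflect (exists2 t, jump t & v = shift u t) (near u v).
Proof.
rewrite near_shiftE; apply: (iffP idP) => [|[t jt ->{v}]].
  case/orP => [/eqP->| /hasP[r ra /orP[] /eqP->]]; first by exists 0; rewrite ?eqxx.
    by exists r%:Z => //; apply/orP; right; apply/hasP; exists r; rewrite ?eqxx.
  by exists (- r%:Z) => //; apply/orP; right; apply/hasP; exists r; rewrite ?eqxx ?orbT.
case/orP: jt => [/eqP->| /hasP[r ra jr]]; first by rewrite eqxx.
by apply/orP; right; apply/hasP; exists r => //; case/orP: jr => /eqP->; rewrite eqxx ?orbT.
Qed.

Lemma near_shift M w d d' : all (fun r => r <= M)%N a ->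
  (`|d' - d| + M < clen w)%N -> near (shift w d) (shift w d') = jump (d' - d).
Proof.
move=> le_aM small; apply/nearP/idP => [[t jt] | jd]; last first.
  by exists (d' - d); rewrite // shiftD addrC subrK.
have le_tM := jump_le le_aM jt.
rewrite shiftD => /shift_inj -> //; last by lia.
by rewrite addrAC subrr add0r.
Qed.

End CirculantAdjacency.

Lemma card_vert (ks : seq nat) : #|vert ks| = sumn ks.
Proof.
rewrite card_tagged (eq_map (fun i : 'I_(size ks) => card_ord (nth 0 ks i))).
by rewrite (map_comp (nth 0 ks) val) val_enum_ord -/(mkseq _ _) mkseq_nth.
Qed.

Section ComponentCount.
Variables (a : seq nat) (M n : nat) (E : {set 'I_n * 'I_n}).
Hypothesis le_aM : all (fun r => r <= M)%N a.

Definition linked : rel 'I_n := fun i j => ((i, j) \in E) || ((j, i) \in E).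

Lemma linked_sym : symmetric linked.
Proof. by move=> i j; rewrite /linked orbC. Qed.

Definition comp_root (i : 'I_n) : 'I_n := fingraph.root linked i.

Lemma comp_root_id i : comp_root (comp_root i) = comp_root i.
Proof. exact: root_root (sym_connect_sym linked_sym) i. Qed.

Lemma comp_root_edge p : p \in E -> comp_root p.1 = comp_root p.2.
Proof.
rewrite /comp_root => pE; apply/(fingraph.rootP (sym_connect_sym linked_sym))/connect1.
by rewrite /linked -surjective_pairing pE.
Qed.

Definition comp_roots : finType := {i : 'I_n | comp_root i == i}.

Definition root_of (i : 'I_n) : comp_roots :=
  exist _ (comp_root i) (introT eqP (comp_root_id i)).

Lemma root_of_root (r : comp_roots) : root_of (val r) = r.
Proof. by apply: val_inj; apply/eqP; exact: valP r. Qed.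

Local Notation B := (n * M)%N.

Definition centered (w : 'I_B.*2.+1) : int := w%:Z - B%:Z.

Lemma centered_le w : (`|centered w| <= B)%N.
Proof. by rewrite /centered; have := ltn_ord w; lia. Qed.

Lemma centered_inj : injective centered.
Proof. by move=> w w'; rewrite /centered => eq_w; apply: val_inj => /=; lia. Qed.

Lemma centered_onto (d : int) : (`|d| <= B)%N -> exists w, centered w = d.
Proof.
move=> le_dB; have lt_d : (absz (d + B%:Z)%R < B.*2.+1)%N by lia.
by exists (Ordinal lt_d); rewrite /centered /=; lia.
Qed.

Definition offsets : {set {ffun 'I_n -> 'I_B.*2.+1}} :=
  [set w : {ffun 'I_n -> 'I_B.*2.+1} |
     [forall i, (comp_root i == i) ==> (centered (w i) == 0)] &&
     [forall p in E, jump a (centered (w p.2) - centered (w p.1))]].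

Variable ks : seq nat.
Hypothesis ks_large : all (fun k => B.*2 + M < k)%N ks.
Implicit Type f : {ffun 'I_n -> vert ks}.

Definition valid f : bool := [forall p in E, near a (f p.1) (f p.2)].

Lemma clen_large (u : vert ks) : (B.*2 + M < clen u)%N.
Proof. by apply: (allP ks_large); apply: mem_nth. Qed.

Lemma valid_linked f i j : valid f -> linked i j ->
  exists2 d : int, (`|d| <= M)%N & f j = shift (f i) d.
Proof.
move=> /forall_inP vf /orP[ijE | jiE].
  by have /nearP[d /(jump_le le_aM) le_dM ->] := vf _ ijE; exists d.
have /nearP[d /(jump_le le_aM) le_dM fi] := vf _ jiE.
by exists (- d); rewrite ?abszN // fi shiftK.
Qed.

Lemma valid_path f i p : valid f -> path linked i p ->
  exists2 d : int, (`|d| <= size p * M)%N & f (last i p) = shift (f i) d.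
Proof.
move=> vf; elim: p i => [|j p IHp] i /=; first by exists 0; rewrite ?shift0.
case/andP => /(valid_linked vf)[d le_dM fj] /IHp[d' le_d'M ->].
by exists (d + d'); [lia | rewrite fj shiftD].
Qed.

Lemma valid_connect f i j : valid f -> connect linked i j ->
  exists2 d : int, (`|d| <= B)%N & f j = shift (f i) d.
Proof.
move=> vf /connectP[p p_path ->]; have [q q_path q_uniq _] := shortenP p_path.
have [d le_d fq] := valid_path vf q_path; exists d => //.
have := max_card (mem (i :: q)); rewrite card_ord (card_uniqP q_uniq) /= => le_qn.
by apply: leq_trans le_d _; rewrite leq_mul2r (ltnW le_qn) orbT.
Qed.

Definition assemble (gw : {ffun comp_roots -> vert ks} * {ffun 'I_n -> 'I_B.*2.+1}) :=
  [ffun i => shift (gw.1 (root_of i)) (centered (gw.2 i))].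

Lemma centered_gap (u : vert ks) w w' : (`|centered w' - centered w| + M < clen u)%N.
Proof. by have := centered_le w; have := centered_le w'; have := clen_large u; lia. Qed.

Lemma assemble_inj : {in setX setT offsets &, injective assemble}.
Proof.
move=> [g w] [g' w']; rewrite !in_setX !inE /=.
move=> /andP[/forallP w_root _] /andP[/forallP w'_root _] eq_gw.
have eq_i i :
    shift (g (root_of i)) (centered (w i)) = shift (g' (root_of i)) (centered (w' i)).
  by have := congr1 (fun f => f i) eq_gw; rewrite !ffunE.
have eq_g : g = g'.
  apply/ffunP => r; have := eq_i (val r); rewrite root_of_root.
  by rewrite (eqP (implyP (w_root _) (valP r))) (eqP (implyP (w'_root _) (valP r))) !shift0.
subst g'; congr pair; apply/ffunP => i; apply/centered_inj/(shift_inj _ (eq_i i)).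
by have := centered_gap (g (root_of i)) (w' i) (w i); lia.
Qed.

Lemma assemble_valid gw : gw \in setX setT offsets -> valid (assemble gw).
Proof.
case: gw => g w; rewrite in_setX !inE /= => /andP[_ /forall_inP w_jump].
apply/forall_inP => p pE; rewrite !ffunE.
have -> : root_of p.2 = root_of p.1 by apply: val_inj; rewrite /= (comp_root_edge pE).
by rewrite (near_shift (M := M)) ?centered_gap ?w_jump.
Qed.

Lemma assemble_onto f :
  valid f -> exists2 gw, gw \in setX setT offsets & f = assemble gw.
Proof.
move=> vf; have /fin_all_exists[w fw] : forall i,
    exists x : 'I_B.*2.+1, f i = shift (f (comp_root i)) (centered x).
  move=> i.
  have [|d le_dB fi] := valid_connect vf (i := comp_root i) (j := i).
    by rewrite (sym_connect_sym linked_sym) connect_root.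
  by have [x cx] := centered_onto le_dB; exists x; rewrite cx.
exists ([ffun r : comp_roots => f (val r)], [ffun i => w i]); last first.
  by apply/ffunP => i; rewrite !ffunE.
rewrite in_setX !inE /=; apply/andP; split.
  apply/forallP => i; apply/implyP => /eqP root_i; rewrite ffunE; apply/eqP.
  apply: (@shift_inj _ (f i)).
    by have := centered_le (w i); have := clen_large (f i); lia.
  by rewrite shift0 {2}(fw i) root_i.
apply/forall_inP => p pE; rewrite !ffunE.
have := forall_inP vf p pE; rewrite (fw p.1) (fw p.2) (comp_root_edge pE).
by rewrite (near_shift (M := M)) ?centered_gap.
Qed.

Lemma card_valid : #|[set f | valid f]| = (sumn ks ^ #|comp_roots| * #|offsets|)%N.
Proof.
have -> : [set f | valid f] = assemble @: setX setT offsets.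
  apply/setP => f; rewrite inE; apply/idP/imsetP => [/assemble_onto | [gw gwP ->]].
    by case=> gw gwP ->; exists gw.
  exact: assemble_valid.
by rewrite card_in_imset ?cardsX ?cardsT ?card_ffun ?card_vert //; exact: assemble_inj.
Qed.

Lemma card_near_tuples :
  #|[set f : {ffun 'I_n -> vert ks} |
        [forall p in E, (p.1 != p.2) && near a (f p.1) (f p.2)]]| =
  if E \subset [set p : 'I_n * 'I_n | p.1 != p.2]
  then (sumn ks ^ #|comp_roots| * #|offsets|)%N else 0%N.
Proof.
case: ifP => [offE | /negbT/subsetPn[p pE]].
  rewrite -card_valid; apply: eq_card => f; rewrite !inE.
  apply/forall_inP/forall_inP => near_f p pE; first by case/andP: (near_f p pE).
  by move: (subsetP offE p pE); rewrite inE => ->; exact: near_f.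
rewrite inE negbK => /eqP p_diag; apply: eq_card0 => f; rewrite !inE.
by apply/negbTE/forall_inPn; exists p; rewrite // p_diag eqxx.
Qed.

End ComponentCount.

Theorem theorem3p4 (a : seq nat) (n : nat) :
  all (fun x => 0 < x)%N a ->
  exists (P : {poly rat}) (N : nat),
    forall ks : seq nat,
      (0 < size ks)%N -> all (fun k => N <= k)%N ks ->
      (num_indep a ks n)%:R = P.[(sumn ks)%:R].
Proof.
move=> _; pose M := \max_(r <- a) r.
have le_aM : all (fun r => r <= M)%N a by apply/allP => r ra; exact: leq_bigmax_seq.
exists (\sum_(J : {set 'I_n * 'I_n})
  ((-1) ^+ #|J| * (J \subset [set p : 'I_n * 'I_n | p.1 != p.2])%:R *
   #|offsets a M J|%:R / n`!%:R) *: 'X^#|comp_roots J|).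
exists ((n * M).*2 + M).+1 => ks _ ks_large.
have nfact_neq0 : n`!%:R != 0 :> rat by rewrite pnatr_eq0 -lt0n fact_gt0.
have -> : num_indep a ks n = #|indep_sets (@union_adj a ks) n| by [].
apply: (mulfI nfact_neq0); rewrite -natrM -card_indep_tuples; last exact: union_adj_irr.
rewrite /indep_tuples (inclusion_exclusion _ (fun (p : 'I_n * 'I_n)
  (f : {ffun 'I_n -> vert ks}) => (p.1 != p.2) && near a (f p.1) (f p.2))).
rewrite horner_sum mulr_sumr; apply: eq_bigr => J _.
rewrite (card_near_tuples J le_aM ks_large) hornerZ hornerXn.
move: #|offsets a M J| #|comp_roots J| (sumn ks) nfact_neq0 => c e s.
by case: ifP => _ nfact_neq0; rewrite ?natrM ?natrX /=; field.
Qed.
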